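(* For every positive integer $n$ and every function $\sigma\colon E(K_{4n})\to\{-1,1\}$ with $\sigma\left(E(K_{4n})\right)=0$, there is a perfect matching $M$ in $K_{4n}$ with $\sigma(M)=0$.
   Context: $K_{4n}$ denotes the complete graph on $4n$ vertices and $E(K_{4n})$ its edge set. For a set $F$ of edges, $\sigma(F)=\sum_{e\in F}\sigma(e)$. *)

From mathcomp Require Import all_boot all_order all_algebra.
Set Implicit Arguments. Unset Strict Implicit. Unset Printing Implicit Defensive.
Import GRing.Theory Num.Theory.
Local Open Scope ring_scope.

(* Complete graph K_m on vertex set 'I_m: edges are the 2-element subsets. *)
Definition is_edge (m : nat) (e : {set 'I_m}) : bool := #|e| == 2%N.

Definition edges (m : nat) : {set {set 'I_m}} := [set e | is_edge e].

Definition sigma_sum (m : nat) (sigma : {set 'I_m} -> int)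
  (F : {set {set 'I_m}}) : int := \sum_(e in F) sigma e.

Definition perfect_matching (m : nat) (M : {set {set 'I_m}}) : Prop :=
  M \subset edges m /\
  forall v : 'I_m, exists! e, e \in M /\ v \in e.

From mathcomp Require Import all_boot all_order all_algebra.
From mathcomp Require Import zify ring lra.
From Stdlib Require Import Classical_Prop.
Set Implicit Arguments. Unset Strict Implicit. Unset Printing Implicit Defensive.
Import Order.TTheory GRing.Theory Num.Theory.
Local Open Scope ring_scope.

(* Take a perfect matching M minimising |sigma(M)|; replacing sigma by -sigma
   we may assume sigma(M) > 0 and derive a contradiction.  The tool is the
   sum inner(W) of sigma over the edges inside a vertex set W: for a partition
   of the vertices into blocks, inner(V) is the sum of the inner sums of the
   blocks plus the cross sums between pairs of blocks.  Applied to the edges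
   of M this gives that sigma(M) is even (cross sums of two edges are even).
   A switch replaces edges uu', vv' of M by uv, u'v'.
   - If no switch lowers sigma(M), each cross sum of two edges of M is at
     least twice their labels, and the decomposition gives
     0 = inner(V) >= (2|M| - 1) sigma(M) > 0.
   - If some switch lowers sigma(M), minimality forces sigma(M) = 2 and a
     switched matching M' with sigma(M') = -2.  Minimality of both M and M'
     makes every relevant cross sum divisible by 4, and the decomposition of
     V into the two switched edges and the rest gives 0 = inner(V) = 2 mod 4.
   The file develops finite-set facts, the inner/cross sums and partitions,
   perfect matchings and switches, the arithmetic of {-1,1} values, the two
   cases above for a minimal matching, and finally the theorem. *)

Definition sign1 (x : int) : Prop := x = 1 \/ x = -1.

Lemma disjointP (T : finType) (A B : {set T}) :
  reflect (forall x, x \in A -> x \notin B) [disjoint A & B].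
Proof.
rewrite disjoints_subset; apply: (iffP subsetP) => H x /H; by rewrite inE.
Qed.

Lemma subset_set2 (T : finType) (x y : T) (A : {set T}) :
  ([set x; y] \subset A) = (x \in A) && (y \in A).
Proof. by rewrite subUset !sub1set. Qed.

Lemma disjoint_set2 (T : finType) (a b : T) (A : {set T}) :
  [disjoint [set a; b] & A] = (a \notin A) && (b \notin A).
Proof. by rewrite disjoints_subset subset_set2 !inE. Qed.

Lemma sum_set2 (T : finType) (F : T -> int) (x y : T) : x != y ->
  \sum_(z in [set x; y]) F z = F x + F y.
Proof. by move=> xy; rewrite big_setU1 ?big_set1 // inE. Qed.

Lemma sum_setU (T : finType) (F : T -> int) (A B : {set T}) :
  [disjoint A & B] ->
  \sum_(x in A :|: B) F x = \sum_(x in A) F x + \sum_(x in B) F x.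
Proof. by move=> dAB; rewrite -bigU //; apply: eq_bigl => x; rewrite inE. Qed.

Lemma set_rem_ind (T : finType) (P : {set T} -> Prop) :
  P set0 -> (forall (R : {set T}) x, x \in R -> P (R :\ x) -> P R) ->
  forall R, P R.
Proof.
move=> P0 Pstep R; move: {2}#|R| (erefl #|R|) => k; elim: k R => [|k IH] R cardR.
  by rewrite (cards0_eq cardR).
have /set0Pn [x xR] : R != set0 by apply: contra_eqN cardR => /eqP ->; rewrite cards0.
apply: (Pstep R x xR); apply: IH.
by move: cardR; rewrite (cardsD1 x) xR => -[].
Qed.

Lemma cover_rem (T : finType) (R : {set {set T}}) (f : {set T}) :
  trivIset R -> f \in R ->
  cover R = f :|: cover (R :\ f) /\ [disjoint f & cover (R :\ f)].
Proof.
move=> tR fR; rewrite coverD1 //; split; last first.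
  by apply/disjointP => x xf; rewrite !inE xf.
apply/setP => x; rewrite !inE; case xf: (x \in f) => //=.
by apply/bigcupP; exists f.
Qed.

Section EdgeSums.
Variables (m : nat) (s : {set 'I_m} -> int).

Definition pw (u v : 'I_m) : int := s [set u; v].

Definition inner (W : {set 'I_m}) : int :=
  \sum_(e in edges m | e \subset W) s e.

(* Sum of the labels of uv over u in X, v in Y; for disjoint X and Y this is
   sigma of the set of edges joining X to Y. *)
Definition cross (X Y : {set 'I_m}) : int :=
  \sum_(u in X) \sum_(v in Y) pw u v.

Lemma in_edges (e : {set 'I_m}) : (e \in edges m) = (#|e| == 2)%N.
Proof. by rewrite inE. Qed.

Lemma set2_edge (u v : 'I_m) : ([set u; v] \in edges m) = (u != v).
Proof. by rewrite in_edges cards2; case: (u != v). Qed.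

Lemma cross_set2 (u u' v v' : 'I_m) : u != u' -> v != v' ->
  cross [set u; u'] [set v; v'] = pw u v + pw u v' + pw u' v + pw u' v'.
Proof. by move=> uu' vv'; rewrite /cross sum_set2 // !sum_set2 // addrA. Qed.

Lemma cross_cover (X : {set 'I_m}) (R : {set {set 'I_m}}) : trivIset R ->
  cross X (cover R) = \sum_(f in R) cross X f.
Proof.
move=> tR; rewrite /cross; under eq_bigr do rewrite big_trivIset //.
by rewrite exchange_big.
Qed.

Lemma inner_edge (e : {set 'I_m}) : e \in edges m -> inner e = s e.
Proof.
move=> eE; rewrite /inner (big_pred1 e) // => f /=.
apply/andP/eqP => [[fE sfe]|->]; last by rewrite eE subxx.
by apply/eqP; rewrite eqEcard sfe; move: fE eE; rewrite !in_edges => /eqP-> /eqP->.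
Qed.

Lemma inner_set0 : inner set0 = 0.
Proof.
rewrite /inner big_pred0 // => e; apply/andP => -[eE]; rewrite subset0 => /eqP e0.
by move: eE; rewrite e0 in_edges cards0.
Qed.

Lemma crossing_edge (X Y e : {set 'I_m}) : e \in edges m ->
  e \subset X :|: Y -> ~~ (e \subset X) -> ~~ (e \subset Y) ->
  exists x y, [/\ x \in X, y \in Y & e = [set x; y]].
Proof.
rewrite in_edges => /cards2P [x [y [_ ->]]].
rewrite !subset_set2 !inE => /andP[/orP[xX|xY] /orP[yX|yY]];
  rewrite ?xX ?yX ?xY ?yY ?andbT //= => _ _.
- by exists x, y.
- by exists y, x; rewrite setUC.
Qed.

(* The edges crossing between disjoint X and Y correspond to X * Y. *)
Lemma crossing_edges_sum (X Y : {set 'I_m}) : [disjoint X & Y] ->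
  \sum_(e in edges m | (e \subset X :|: Y) && ~~ (e \subset X) && ~~ (e \subset Y))
     s e = cross X Y.
Proof.
move=> dXY; pose pair (p : 'I_m * 'I_m) := [set p.1; p.2].
have inj_pair : {in [pred p | (p.1 \in X) && (p.2 \in Y)] &, injective pair}.
  move=> [a b] [a' b'] /andP[/= aX bY] /andP[/= a'X b'Y]; rewrite /pair /= => eab.
  have : a \in [set a'; b'] by rewrite -eab !inE eqxx.
  rewrite !inE => /orP[/eqP aa'|/eqP ab'].
    2: by move: b'Y; rewrite -ab' (disjointFr dXY aX).
  subst a'; have : b \in [set a; b'] by rewrite -eab !inE eqxx orbT.
  rewrite !inE => /orP[/eqP ba|/eqP -> //].
  by move: aX; rewrite -ba (disjointFl dXY bY).
rewrite /cross pair_big /= -[RHS](big_imset _ inj_pair) /=.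
apply: eq_bigl => e; apply/idP/imsetP => [/andP[eE /andP[/andP[eXY nX] nY]]|].
  have [x [y [xX yY ->]]] := crossing_edge eE eXY nX nY.
  by exists (x, y); rewrite ?inE /= ?xX ?yY.
move=> [[a b]]; rewrite inE => /andP [/= aX bY] ->; rewrite /pair /=.
rewrite set2_edge !subset_set2 !inE aX bY (disjointFl dXY bY) (disjointFr dXY aX).
by rewrite /= !andbT; apply: contraTneq bY => <-; rewrite (disjointFr dXY aX).
Qed.

Lemma inner_setU (X Y : {set 'I_m}) : [disjoint X & Y] ->
  inner (X :|: Y) = inner X + inner Y + cross X Y.
Proof.
move=> dXY; rewrite -crossing_edges_sum // /inner.
rewrite (bigID (fun e : {set 'I_m} => e \subset X)) /= -addrA; congr (_ + _).
  apply: eq_bigl => e; case sX: (e \subset X); rewrite ?andbT ?andbF //.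
  by rewrite (subset_trans sX (subsetUl X Y)) andbT.
rewrite (bigID (fun e : {set 'I_m} => e \subset Y)) /=; congr (_ + _); last first.
  by apply: eq_bigl => e; rewrite !andbA.
apply: eq_bigl => e; case sY: (e \subset Y); rewrite ?andbT ?andbF //.
case eE: (e \in edges m) => //=; rewrite (subset_trans sY (subsetUr X Y)) /=.
move: eE; rewrite in_edges => /cards2P [x [y [_ exy]]].
by move: sY; rewrite exy !subset_set2 => /andP[xY _]; rewrite (disjointFl dXY xY).
Qed.

End EdgeSums.

Section Partitions.
Variables (m : nat) (s : {set 'I_m} -> int).

Lemma inner_cover_rem (R : {set {set 'I_m}}) (f : {set 'I_m}) :
  trivIset R -> f \in R ->
  inner s (cover R) =
    inner s f + inner s (cover (R :\ f)) + \sum_(g in R :\ f) cross s f g.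
Proof.
move=> tR fR; have [-> dis] := cover_rem tR fR.
by rewrite inner_setU // cross_cover //; apply: trivIsetS tR; apply: subsetDl.
Qed.

Lemma inner_cover_mod (d : int) (R : {set {set 'I_m}}) : trivIset R ->
  {in R &, forall f g, f != g -> (d %| cross s f g)%Z} ->
  (d %| inner s (cover R) - \sum_(f in R) inner s f)%Z.
Proof.
elim/set_rem_ind: R => [_ _|R f fR IH tR dR].
  by rewrite /cover !big_set0 inner_set0 subrr dvdz0.
rewrite (inner_cover_rem tR fR) (big_setD1 f fR) /=.
have -> : forall a b c e : int, a + b + c - (a + e) = (b - e) + c by move=> *; ring.
apply: rpredD.
  apply: IH; first by apply: trivIsetS tR; apply: subsetDl.
  by move=> f1 f2 /setD1P[_ f1R] /setD1P[_ f2R]; apply: dR.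
by apply: rpred_sum => g /setD1P[gf gR]; apply: dR; rewrite // eq_sym.
Qed.

Lemma inner_cover_lower (R : {set {set 'I_m}}) : trivIset R ->
  {in R &, forall f g, f != g -> 2 * (inner s f + inner s g) <= cross s f g} ->
  2 * #|R|%:R * \sum_(f in R) inner s f <=
    inner s (cover R) + \sum_(f in R) inner s f.
Proof.
elim/set_rem_ind: R => [_ _|R f fR IH tR dR].
  by rewrite /cover !big_set0 inner_set0 cards0 !mulr0.
set k := #|R :\ f|.
have IHf : 2 * k%:R * \sum_(g in R :\ f) inner s g <=
           inner s (cover (R :\ f)) + \sum_(g in R :\ f) inner s g.
  apply: IH; first by apply: trivIsetS tR; apply: subsetDl.
  by move=> f1 f2 /setD1P[_ f1R] /setD1P[_ f2R]; apply: dR.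
have crossR : \sum_(g in R :\ f) 2 * (inner s f + inner s g) <=
              \sum_(g in R :\ f) cross s f g.
  by apply: ler_sum => g /setD1P[gf gR]; apply: dR; rewrite // eq_sym.
move: crossR IHf; rewrite -mulr_sumr big_split /= sumr_const -/k.
rewrite (inner_cover_rem tR fR) (big_setD1 f fR) /= (cardsD1 f) fR -/k.
have -> : (1 + k)%:R = k%:R + 1 :> int by rewrite natrD addrC.
move: (inner s f) (inner s (cover (R :\ f))) (\sum_(g in R :\ f) cross s f g : int).
move: (\sum_(g in R :\ f) inner s g : int) => S Kf KRf C.
rewrite -[Kf *+ k]mulr_natr; move: (k%:R : int) => kk.
nia.
Qed.

End Partitions.

Section PerfectMatchings.
Variable m : nat.
Implicit Types M : {set {set 'I_m}}.

Definition is_pm M : bool :=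
  [&& M \subset edges m, trivIset M & cover M == setT].

Lemma perfect_matchingP M : perfect_matching M <-> is_pm M.
Proof.
split=> [[ME uniqM]|/and3P[ME /trivIsetP tM /eqP cM]].
  apply/and3P; split=> //.
    apply/trivIsetP => A B AM BM AB; apply/disjointP => x xA; apply/negP => xB.
    have [e [_ eu]] := uniqM x.
    by move/negP: AB; apply; rewrite -(eu A (conj AM xA)) (eu B (conj BM xB)).
  apply/eqP/setP => x; rewrite inE; have [e [[eM xe] _]] := uniqM x.
  by apply/bigcupP; exists e.
split=> // v; have : v \in cover M by rewrite cM inE.
move=> /bigcupP [e eM ve]; exists e; split => // e' [e'M ve'].
apply/eqP; apply: contraT => ee'.
by have /disjointP/(_ v ve) := tM _ _ eM e'M ee'; rewrite ve'.
Qed.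

Lemma pm_edge M e : is_pm M -> e \in M -> e \in edges m.
Proof. by case/and3P => ME _ _; apply: (subsetP ME). Qed.

Lemma pm_pair M e : is_pm M -> e \in M ->
  exists p p' : 'I_m, p != p' /\ e = [set p; p'].
Proof. by move=> pM eM; apply/cards2P; rewrite -in_edges (pm_edge pM eM). Qed.

Lemma pm_disjoint M e f : is_pm M -> e \in M -> f \in M -> e != f ->
  [disjoint e & f].
Proof. by case/and3P => _ /trivIsetP tM _; apply: tM. Qed.

Lemma pm_cover M x : is_pm M -> exists2 e, e \in M & x \in e.
Proof.
case/and3P => _ _ /eqP cM; have : x \in cover M by rewrite cM inE.
by move/bigcupP.
Qed.

Lemma pm_ends M e f (u u' v v' : 'I_m) :
  is_pm M -> e \in M -> f \in M -> e != f ->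
  e = [set u; u'] -> f = [set v; v'] ->
  [/\ u != u', v != v', u != v & u != v'] /\ (u' != v /\ u' != v').
Proof.
move=> pM eM fM ef eu fv.
have := pm_edge pM eM; have := pm_edge pM fM; rewrite eu fv !set2_edge => -> ->.
have := pm_disjoint pM eM fM ef; rewrite eu fv disjoint_set2 !inE !negb_or.
by case/andP => /andP[-> ->] /andP[-> ->].
Qed.

(* The vertex paired with i in the matching {{0,1},{2,3},...}. *)
Definition partner (i : 'I_m) : 'I_m :=
  insubd i (if odd i then i.-1 else i.+1)%N.

Hypothesis m_even : (2 %| m)%N.

Lemma partnerE i : val (partner i) = (if odd i then i.-1 else i.+1)%N.
Proof.
rewrite /partner insubdK //; case: ifP => [_|odd_i].
  exact: leq_ltn_trans (leq_pred i) _.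
change (i.+1 < m)%N; rewrite ltn_neqAle ltn_ord andbT.
apply: contraTneq m_even => <-.
by rewrite dvdn2 /= odd_i.
Qed.

Lemma partnerK : involutive partner.
Proof.
move=> i; apply: val_inj; rewrite !partnerE.
by case: i => -[|k] //= _; case ok: (odd k) => /=; rewrite ?ok.
Qed.

Lemma partner_neq i : partner i != i.
Proof. by rewrite -(inj_eq val_inj) partnerE; case: ifP => /=; lia. Qed.

Lemma exists_pm : exists M, is_pm M.
Proof.
exists [set [set i; partner i] | i : 'I_m].
have same : forall i x, x \in [set i; partner i] ->
    [set i; partner i] = [set x; partner x].
  by move=> i x /set2P [] ->; rewrite ?partnerK 1?setUC.
apply/and3P; split.
- by apply/subsetP => _ /imsetP [i _ ->]; rewrite set2_edge eq_sym partner_neq.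
- apply/trivIsetP => _ _ /imsetP [i _ ->] /imsetP [j _ ->] ij.
  apply/disjointP => x xi; apply: contra ij => xj.
  by rewrite (same _ _ xi) (same _ _ xj).
- apply/eqP/setP => x; rewrite inE; apply/bigcupP; exists [set x; partner x].
    by apply/imsetP; exists x.
  by rewrite !inE eqxx.
Qed.

End PerfectMatchings.

Definition switch (m : nat) (M : {set {set 'I_m}}) (g h : {set 'I_m})
  (u u' v v' : 'I_m) : {set {set 'I_m}} :=
  M :\ g :\ h :|: [set [set u; v]; [set u'; v']].

Section Switch.
Variables (m : nat) (M : {set {set 'I_m}}) (g h : {set 'I_m}) (u u' v v' : 'I_m).
Hypotheses (pM : is_pm M) (gM : g \in M) (hM : h \in M) (gh : g != h).
Hypotheses (gE : g = [set u; u']) (hE : h = [set v; v']).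

Let ends := pm_ends pM gM hM gh gE hE.

Lemma switch_mem f : f \in M -> f != g -> f != h -> f \in switch M g h u u' v v'.
Proof. by move=> fM fg fh; rewrite !inE fM fg fh. Qed.

Lemma switch_rest_avoids A : A \in M :\ g :\ h ->
  [&& u \notin A, u' \notin A, v \notin A & v' \notin A].
Proof.
rewrite !inE => /and3P[Ah Ag AM].
have := pm_disjoint pM AM gM Ag; have := pm_disjoint pM AM hM Ah.
by rewrite gE hE !(disjoint_sym A) !disjoint_set2 => /andP[-> ->] /andP[-> ->].
Qed.

Lemma switch_disjoint :
  [disjoint M :\ g :\ h & [set [set u; v]; [set u'; v']]].
Proof.
apply/disjointP => A /switch_rest_avoids /and4P[nu nu' _ _].
by rewrite !inE; apply/negP => /orP[]/eqP AE; [move: nu | move: nu'];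
   rewrite AE !inE eqxx.
Qed.

Lemma switch_pm : is_pm (switch M g h u u' v v').
Proof.
have [[uu' vv' uv uv'] [u'v u'v']] := ends.
have /and3P[ME /trivIsetP tM _] := pM.
apply/and3P; split.
- apply/subsetP => A /setUP[/setD1P[_ /setD1P[_ AM]]|/set2P[]->].
  + exact: (subsetP ME).
  + by rewrite set2_edge uv.
  + by rewrite set2_edge u'v'.
- apply/trivIsetP => A B; rewrite ![_ \in switch _ _ _ _ _ _ _]inE.
  have new_rest C D : C \in M :\ g :\ h -> D \in [set [set u; v]; [set u'; v']] ->
      [disjoint C & D].
    move=> /switch_rest_avoids /and4P[nu nu' nv nv'].
    rewrite !inE => /orP[]/eqP->;
      by rewrite disjoint_sym disjoint_set2 ?nu ?nv ?nu' ?nv'.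
  move=> /orP[AR|AN] /orP[BR|BN] AB.
  + by move: AR BR; rewrite !inE => /and3P[_ _ AM] /and3P[_ _ BM]; apply: tM.
  + exact: new_rest.
  + by rewrite disjoint_sym; apply: new_rest.
  + move: AN BN AB; rewrite !inE => /orP[]/eqP-> /orP[]/eqP->; rewrite ?eqxx //= => _;
      rewrite disjoint_set2 !inE !negb_or.
    * by rewrite uu' uv' (eq_sym v) u'v vv'.
    * by rewrite (eq_sym u') uu' u'v (eq_sym v') uv' (eq_sym v') vv'.
- apply/eqP/setP => x; rewrite inE; have [e eM xe] := pm_cover x pM.
  apply/bigcupP; case: (e =P g) => [eg|ng]; last case: (e =P h) => [eh|nh].
  + move: xe; rewrite eg gE => /set2P[]->.
    * by exists [set u; v]; rewrite !inE ?eqxx ?orbT.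
    * by exists [set u'; v']; rewrite !inE ?eqxx ?orbT.
  + move: xe; rewrite eh hE => /set2P[]->.
    * by exists [set u; v]; rewrite !inE ?eqxx ?orbT.
    * by exists [set u'; v']; rewrite !inE ?eqxx ?orbT.
  + by exists e => //; apply: switch_mem => //; apply/eqP.
Qed.

Lemma switch_sum (s : {set 'I_m} -> int) :
  sigma_sum s (switch M g h u u' v v') =
    sigma_sum s M - s g - s h + pw s u v + pw s u' v'.
Proof.
have [[uu' _ _ uv'] _] := ends.
rewrite /sigma_sum sum_setU ?switch_disjoint // sum_set2; last first.
  apply/negP => /eqP E; have : u \in [set u'; v'] by rewrite -E !inE eqxx.
  by rewrite !inE (negbTE uu') (negbTE uv').
rewrite (big_setD1 g gM) (big_setD1 h) /= ?inE ?(eq_sym h) ?gh // /pw; ring.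
Qed.

End Switch.

Lemma sign1_sum4_even (a b c d : int) :
  sign1 a -> sign1 b -> sign1 c -> sign1 d -> (2 %| a + b + c + d)%Z.
Proof. rewrite /sign1; lia. Qed.

(* A switch lowering a positive even sum S by 2 or 4 keeps |S| minimal only
   when it jumps from 2 to -2. *)
Lemma lowering_switch_forced (S a b y1 y2 : int) :
  sign1 a -> sign1 b -> sign1 y1 -> sign1 y2 -> 0 < S -> (2 %| S)%Z ->
  y1 + y2 < a + b -> `|S| <= `|S - a - b + y1 + y2| ->
  [/\ S = 2, a = 1, b = 1, y1 = -1 & y2 = -1].
Proof. rewrite /sign1 => *; split; lia. Qed.

(* The cross sum x1 + x2 + x3 + x4 of two edges, split into the two ways of
   re-pairing their ends, is 0 mod 4 when each re-pairing sums to -2 or 2. *)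
Lemma cross4_balanced (x1 x2 x3 x4 : int) :
  sign1 x1 -> sign1 x2 -> sign1 x3 -> sign1 x4 ->
  2 <= `|x1 + x4| -> 2 <= `|x2 + x3| -> (4 %| x1 + x2 + x3 + x4)%Z.
Proof. rewrite /sign1; lia. Qed.

(* The same conclusion when the re-pairings cannot move a sigma of 2 or of -2
   (through edges labelled a, b) closer to 0. *)
Lemma cross4_opposite (a b x1 x2 x3 x4 : int) :
  sign1 a -> sign1 b -> sign1 x1 -> sign1 x2 -> sign1 x3 -> sign1 x4 ->
  2 <= `|2 - a - b + x1 + x4| -> 2 <= `|2 - a - b + x2 + x3| ->
  2 <= `|-2 - a - b + x1 + x4| -> 2 <= `|-2 - a - b + x2 + x3| ->
  (4 %| x1 + x2 + x3 + x4)%Z.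
Proof. rewrite /sign1; lia. Qed.

Lemma two_plus_mod4_neq0 (a b c : int) :
  (4 %| a)%Z -> (4 %| b)%Z -> (4 %| c)%Z -> 1 + 1 + a + b + c != 0.
Proof. by move=> *; apply/eqP; lia. Qed.

Section MinimalMatching.
Variables (m : nat) (s : {set 'I_m} -> int).
Hypothesis s_sign : forall e, e \in edges m -> sign1 (s e).
Hypothesis s_total : sigma_sum s (edges m) = 0.

Lemma pw_sign (u v : 'I_m) : u != v -> sign1 (pw s u v).
Proof. by move=> uv; apply: s_sign; rewrite set2_edge. Qed.

Lemma inner_pm_cover M : is_pm M -> inner s (cover M) = 0.
Proof.
case/and3P=> _ _ /eqP->; rewrite -s_total /inner /sigma_sum.
by apply: eq_bigl => e; rewrite subsetT andbT.
Qed.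

Lemma inner_pm_blocks M : is_pm M -> \sum_(e in M) inner s e = sigma_sum s M.
Proof. by move=> pM; apply: eq_bigr => e eM; rewrite inner_edge // (pm_edge pM). Qed.

(* sigma(M) has the parity of sigma(E(K_m)) = 0. *)
Lemma pm_sum_even M : is_pm M -> (2 %| sigma_sum s M)%Z.
Proof.
move=> pM; have /and3P[_ tM _] := pM.
have := inner_cover_mod (s := s) (d := 2) tM.
rewrite inner_pm_cover // inner_pm_blocks // sub0r.
rewrite rpredN; apply=> e f eM fM ef.
have [p [p' [_ eE]]] := pm_pair pM eM; have [q [q' [_ fE]]] := pm_pair pM fM.
have [[pp' qq' pq pq'] [p'q p'q']] := pm_ends pM eM fM ef eE fE.
by rewrite eE fE cross_set2 //; apply: sign1_sum4_even; apply: pw_sign.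
Qed.

Variable M : {set {set 'I_m}}.
Hypothesis pM : is_pm M.
Hypothesis M_min : forall N, is_pm N -> `|sigma_sum s M| <= `|sigma_sum s N|.

Lemma switch_bound X e f (p p' q q' : 'I_m) :
  is_pm X -> e \in X -> f \in X -> e != f -> e = [set p; p'] -> f = [set q; q'] ->
  `|sigma_sum s M| <= `|sigma_sum s X - s e - s f + pw s p q + pw s p' q'|.
Proof.
move=> pX eX fX ef eE fE; rewrite -(switch_sum pX eX fX ef eE fE s).
exact/M_min/(switch_pm pX eX fX ef eE fE).
Qed.

Lemma cross_mod4_balanced X e f : `|sigma_sum s M| = 2 ->
  is_pm X -> e \in X -> f \in X -> e != f -> sigma_sum s X = s e + s f ->
  (4 %| cross s e f)%Z.
Proof.
move=> Mabs pX eX fX ef sX.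
have [p [p' [_ eE]]] := pm_pair pX eX; have [q [q' [_ fE]]] := pm_pair pX fX.
have [[pp' qq' pq pq'] [p'q p'q']] := pm_ends pX eX fX ef eE fE.
have := switch_bound pX eX fX ef eE fE.
have := switch_bound pX eX fX ef eE (etrans fE (setUC _ _)).
have rest0 : sigma_sum s X - s e - s f = 0 by rewrite sX; ring.
rewrite Mabs rest0 !add0r => b2 b1.
by rewrite eE fE cross_set2 //; apply: cross4_balanced; try apply: pw_sign.
Qed.

Lemma cross_mod4_opposite X1 X2 e f : `|sigma_sum s M| = 2 ->
  is_pm X1 -> is_pm X2 -> sigma_sum s X1 = 2 -> sigma_sum s X2 = -2 ->
  e \in X1 -> f \in X1 -> e \in X2 -> f \in X2 -> e != f ->
  (4 %| cross s e f)%Z.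
Proof.
move=> Mabs pX1 pX2 sX1 sX2 eX1 fX1 eX2 fX2 ef.
have [p [p' [_ eE]]] := pm_pair pX1 eX1; have [q [q' [_ fE]]] := pm_pair pX1 fX1.
have [[pp' qq' pq pq'] [p'q p'q']] := pm_ends pX1 eX1 fX1 ef eE fE.
have fE' := etrans fE (setUC _ _).
have := switch_bound pX1 eX1 fX1 ef eE fE; have := switch_bound pX1 eX1 fX1 ef eE fE'.
have := switch_bound pX2 eX2 fX2 ef eE fE; have := switch_bound pX2 eX2 fX2 ef eE fE'.
rewrite sX1 sX2 Mabs => b4 b3 b2 b1.
rewrite eE fE cross_set2 //; apply: (cross4_opposite _ _ _ _ _ _ b1 b2 b3 b4);
  by [apply: s_sign; apply: pm_edge pX1 _ | apply: pw_sign].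
Qed.

(* If no switch lowers sigma, cross sums dominate and sigma(M) > 0 is absurd. *)
Lemma no_lowering_switch_absurd : 0 < sigma_sum s M ->
  (forall g h (u u' v v' : 'I_m), g \in M -> h \in M -> g != h ->
     g = [set u; u'] -> h = [set v; v'] -> s g + s h <= pw s u v + pw s u' v') ->
  False.
Proof.
move=> M_pos no_lowering; have /and3P[_ tM _] := pM.
have M_nonempty : (0 < #|M|)%N.
  rewrite card_gt0; apply: contraTneq M_pos => ->.
  by rewrite /sigma_sum big_set0 ltxx.
have cross_dom : {in M &, forall e f, e != f ->
    2 * (inner s e + inner s f) <= cross s e f}.
  move=> e f eM fM ef; rewrite !inner_edge ?(pm_edge pM) //.
  have [p [p' [_ eE]]] := pm_pair pM eM; have [q [q' [_ fE]]] := pm_pair pM fM.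
  have [[pp' qq' _ _] _] := pm_ends pM eM fM ef eE fE.
  have := no_lowering _ _ _ _ _ _ eM fM ef eE fE.
  have := no_lowering _ _ _ _ _ _ eM fM ef eE (etrans fE (setUC _ _)).
  rewrite eE fE cross_set2 //; lia.
have := inner_cover_lower tM cross_dom.
rewrite inner_pm_cover // inner_pm_blocks // add0r.
move: M_nonempty M_pos; rewrite -(ltr_nat int); move: (#|M|%:R : int).
move: (sigma_sum s M) => S k; nia.
Qed.

Section LoweringSwitch.
Variables (g h : {set 'I_m}) (u u' v v' : 'I_m).
Hypotheses (M_pos : 0 < sigma_sum s M) (gM : g \in M) (hM : h \in M) (gh : g != h).
Hypotheses (gE : g = [set u; u']) (hE : h = [set v; v']).
Hypothesis lowering : pw s u v + pw s u' v' < s g + s h.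

Let ends := pm_ends pM gM hM gh gE hE.
Let M' := switch M g h u u' v v'.
Let R := M :\ g :\ h.

Lemma lowering_switch_values :
  [/\ sigma_sum s M = 2, s g = 1, s h = 1, pw s u v = -1 & pw s u' v' = -1].
Proof.
have [[_ _ uv _] [_ u'v']] := ends.
apply: lowering_switch_forced => //.
- by apply: s_sign; apply: pm_edge pM gM.
- by apply: s_sign; apply: pm_edge pM hM.
- exact: pw_sign.
- exact: pw_sign.
- exact: pm_sum_even.
- exact: switch_bound.
Qed.

Lemma switched_sum : sigma_sum s M' = -2.
Proof.
have [sM sg sh suv su'v'] := lowering_switch_values.
by rewrite /M' (switch_sum pM gM hM gh gE hE) sM sg sh suv su'v'.
Qed.

Lemma M_abs2 : `|sigma_sum s M| = 2.
Proof. by case: lowering_switch_values => -> *. Qed.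

Lemma in_rest f : f \in R -> [/\ f \in M, f != g & f != h].
Proof. by rewrite !inE => /and3P[-> -> ->]. Qed.

(* Edges untouched by the switch lie in both M and M'. *)
Lemma cross_mod4_rest : {in R &, forall e f, e != f -> (4 %| cross s e f)%Z}.
Proof.
move=> e f /in_rest[eM eg eh] /in_rest[fM fg fh] ef.
have [sM _ _ _ _] := lowering_switch_values.
apply: (cross_mod4_opposite M_abs2 pM (switch_pm pM gM hM gh gE hE)) => //;
  by [rewrite switched_sum | apply: switch_mem].
Qed.

(* For an untouched edge f: if s f = 1, the pairs (g, f) and (h, f) carry all of
   sigma(M) = 2; if s f = -1, the pairs (uv, f) and (u'v', f) carry all of
   sigma(M') = -2, and the four vertices of g, h are those of uv, u'v'. *)
Lemma cross_mod4_switched f : f \in R -> (4 %| cross s g f + cross s h f)%Z.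
Proof.
move=> /in_rest[fM fg fh]; have [sM sg sh suv su'v'] := lowering_switch_values.
have [[uu' vv' uv uv'] [u'v u'v']] := ends.
have pM' := switch_pm pM gM hM gh gE hE.
have [p [p' [pp' fE]]] := pm_pair pM fM.
have gf : g != f by rewrite eq_sym.
have hf : h != f by rewrite eq_sym.
have [[_ _ up up'] [u'p u'p']] := pm_ends pM gM fM gf gE fE.
have [[_ _ vp vp'] [v'p v'p']] := pm_ends pM hM fM hf hE fE.
have [] := s_sign (pm_edge pM fM) => sf.
  apply: rpredD; apply: (cross_mod4_balanced M_abs2 pM) => //.
    by rewrite sM sg sf.
  by rewrite sM sh sf.
have regroup : cross s g f + cross s h f =
               cross s [set u; v] f + cross s [set u'; v'] f.
  by rewrite gE hE fE !cross_set2 //; ring.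
have fM' : f \in M' by apply: switch_mem.
have uf : u \notin f by rewrite fE !inE negb_or up up'.
have u'f : u' \notin f by rewrite fE !inE negb_or u'p u'p'.
have suv' : s [set u; v] = -1 := suv.
have su'v'' : s [set u'; v'] = -1 := su'v'.
rewrite regroup; apply: rpredD; apply: (cross_mod4_balanced M_abs2 pM') => //.
- by rewrite /M' /switch !inE eqxx orbT.
- by apply: contraNneq uf => <-; rewrite !inE eqxx.
- by rewrite switched_sum suv' sf.
- by rewrite /M' /switch !inE eqxx !orbT.
- by apply: contraNneq u'f => <-; rewrite !inE eqxx.
- by rewrite switched_sum su'v'' sf.
Qed.

(* Splitting V = g + h + (the rest) gives sigma(E(K_m)) = 2 mod 4. *)
Lemma lowering_switch_absurd : False.
Proof.
have [sM sg sh _ _] := lowering_switch_values.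
have /and3P[_ tM _] := pM.
have hMg : h \in M :\ g by rewrite !inE eq_sym gh.
have tMg : trivIset (M :\ g) by apply: trivIsetS tM; apply: subsetDl.
have tR : trivIset R by apply: trivIsetS tMg; apply: subsetDl.
have split_cover : inner s (cover M) = s g + s h + inner s (cover R) +
    cross s g h + \sum_(f in R) (cross s g f + cross s h f).
  rewrite (inner_cover_rem s tM gM) (inner_cover_rem s tMg hMg) (big_setD1 h hMg).
  rewrite big_split /= -/R (inner_edge s (pm_edge pM gM)).
  by rewrite (inner_edge s (pm_edge pM hM)); ring.
have sumR : \sum_(e in R) inner s e = 0.
  rewrite (eq_bigr s) => [|e /in_rest[eM _ _]]; last exact/inner_edge/(pm_edge pM).
  apply: (addrI 2); rewrite addr0 -[in RHS]sM /sigma_sum (big_setD1 g gM).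
  by rewrite (big_setD1 h hMg) /= sg sh addrA.
have inner_R : (4 %| inner s (cover R))%Z.
  by have := inner_cover_mod tR cross_mod4_rest; rewrite sumR subr0.
have cross_gh : (4 %| cross s g h)%Z.
  by apply: (cross_mod4_balanced M_abs2 pM); rewrite // sM sg sh.
have cross_R : (4 %| \sum_(f in R) (cross s g f + cross s h f))%Z.
  by apply: rpred_sum => f; apply: cross_mod4_switched.
move: (inner_pm_cover pM); rewrite split_cover sg sh.
exact/eqP/two_plus_mod4_neq0.
Qed.

End LoweringSwitch.

Lemma minimal_pm_not_pos : ~ 0 < sigma_sum s M.
Proof.
move=> M_pos.
have [[g [h [u [u' [v [v' [[gM hM gh gE hE] low]]]]]]]|no_low] := classic
  (exists g h (u u' v v' : 'I_m), [/\ g \in M, h \in M, g != h,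
     g = [set u; u'] & h = [set v; v']] /\ pw s u v + pw s u' v' < s g + s h).
  exact: (lowering_switch_absurd M_pos gM hM gh gE hE low).
apply: (no_lowering_switch_absurd M_pos) => g h u u' v v' gM hM gh gE hE.
rewrite leNgt; apply/negP => low.
by apply: no_low; exists g, h, u, u', v, v'; split.
Qed.

End MinimalMatching.

(* A perfect matching minimising |sigma(M)| has sigma(M) = 0; the negative
   case reduces to the positive one by replacing sigma with -sigma. *)
Lemma minimal_pm_sum0 (m : nat) (s : {set 'I_m} -> int) (M : {set {set 'I_m}}) :
  (forall e, e \in edges m -> sign1 (s e)) -> sigma_sum s (edges m) = 0 ->
  is_pm M -> (forall N, is_pm N -> `|sigma_sum s M| <= `|sigma_sum s N|) ->
  sigma_sum s M = 0.
Proof.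
move=> s_sign s_total pM M_min.
have [neg|pos|//] := ltrgtP (sigma_sum s M) 0; exfalso; last first.
  exact: (minimal_pm_not_pos s_sign s_total pM M_min pos).
pose s' e := - s e.
have sum_s' F : sigma_sum s' F = - sigma_sum s F by rewrite /sigma_sum sumrN.
have s'_sign e : e \in edges m -> sign1 (s' e).
  by case/s_sign => se; rewrite /s' se; [right | left]; rewrite ?opprK.
have s'_total : sigma_sum s' (edges m) = 0 by rewrite sum_s' s_total oppr0.
have s'_min N : is_pm N -> `|sigma_sum s' M| <= `|sigma_sum s' N|.
  by move=> pN; rewrite !sum_s' !normrN; apply: M_min.
apply: (minimal_pm_not_pos s'_sign s'_total pM s'_min).
by rewrite sum_s' oppr_gt0.
Qed.

Theorem theorem1 (n : nat) (sigma : {set 'I_(4 * n)} -> int) :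
  (0 < n)%N ->
  (forall e, e \in edges (4 * n) -> sigma e = 1 \/ sigma e = -1) ->
  sigma_sum sigma (edges (4 * n)) = 0 ->
  exists M : {set {set 'I_(4 * n)}},
    perfect_matching M /\ sigma_sum sigma M = 0.
Proof.
move=> _ sigma_sign sigma_total.
have [M0 pM0] : exists M : {set {set 'I_(4 * n)}}, is_pm M.
  by apply: exists_pm; rewrite dvdn_mulr.
have [M pM M_min] := arg_minnP (fun M => `|sigma_sum sigma M|%N) pM0.
exists M; split; first exact/perfect_matchingP.
apply: minimal_pm_sum0 sigma_sign sigma_total pM _ => N pN.
by rewrite -!abszE lez_nat; apply: M_min.
Qed.
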